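(* Let $\alpha$ be a countable ordinal and let $P\in\mathbb{J}_\alpha$. If $P$ is embeddable in $[\omega]^{<\omega}$ by a map preserving finite joins, then there is a sierpinskisation $S$ of $\alpha$ and $\omega$ such that $I_{<\omega}(S)\in\mathbb{J}_\alpha$ and $I_{<\omega}(S)$ is embeddable in $P$ by a map preserving finite joins.
   Context: $\mathbb{J}_\alpha$ is the class of join-semilattices $P$ with a least element such that the lattice $J(P)$ of ideals (non-empty up-directed initial segments, ordered by inclusion) of $P$ contains a chain of order type $I(\alpha)$, the type of the chain of all initial segments of a chain of type $\alpha$. $[\omega]^{<\omega}$ is the set of finite subsets of $\mathbb{N}$ ordered by inclusion. A sierpinskisation of $\alpha$ and $\omega$ is a poset whose order is the intersection of two linear orders on its underlying set, one of type $\alpha$ and one of type $\omega$. $I_{<\omega}(S)$ is the set of finitely generated initial segments of $S$ ordered by inclusion. A map preserves finite joins if $f(\bigvee X)=\bigvee f(X)$ for every finite $X$ (including $X=\emptyset$). *)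

From Stdlib Require Import List.
From mathcomp Require Import all_boot.
From mathcomp Require Import finmap.

Set Implicit Arguments.
Unset Strict Implicit.
Unset Printing Implicit Defensive.

Definition po_axioms {T : Type} (le : T -> T -> Prop) : Prop :=
  (forall x, le x x) /\
  (forall x y, le x y -> le y x -> x = y) /\
  (forall x y z, le x y -> le y z -> le x z).

Definition is_lub {T : Type} (le : T -> T -> Prop) (x y z : T) : Prop :=
  le x z /\ le y z /\ (forall w, le x w -> le y w -> le z w).

Definition is_least {T : Type} (le : T -> T -> Prop) (b : T) : Prop :=
  forall x, le b x.

Definition join_semilattice_bot {T : Type} (le : T -> T -> Prop) : Prop :=
  po_axioms le /\
  (forall x y, exists z, is_lub le x y z) /\
  (exists b, is_least le b).

Definition ideal {T : Type} (le : T -> T -> Prop) (I : T -> Prop) : Prop :=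
  (exists x, I x) /\
  (forall x y, le x y -> I y -> I x) /\
  (forall x y, I x -> I y -> exists z, I z /\ le x z /\ le y z).

(* A countably infinite ordinal alpha is represented by a strict well-order
   [lt] on nat (the chain (nat, lt) has order type alpha). *)
Definition strict_well_order (lt : nat -> nat -> Prop) : Prop :=
  (forall x, ~ lt x x) /\
  (forall x y z, lt x y -> lt y z -> lt x z) /\
  (forall x y, x <> y -> lt x y \/ lt y x) /\
  well_founded lt.

(* initial segments of the chain alpha; I(alpha) = these, ordered by inclusion *)
Definition initial_segment (lt : nat -> nat -> Prop) (A : nat -> Prop) : Prop :=
  forall x y, lt x y -> A y -> A x.

(* P = (T, le) belongs to J_alpha: P is a join-semilattice with a least
   element and J(P) contains a chain of type I(alpha), i.e. there is an
   order embedding of I(alpha) into (J(P), inclusion). *)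
Definition in_J (lt : nat -> nat -> Prop) {T : Type} (le : T -> T -> Prop) : Prop :=
  join_semilattice_bot le /\
  exists F : (nat -> Prop) -> (T -> Prop),
    (forall A, initial_segment lt A -> ideal le (F A)) /\
    (forall A B, initial_segment lt A -> initial_segment lt B ->
       ((forall n, A n -> B n) <-> (forall p, F A p -> F B p))).

(* order embedding preserving finite joins (binary joins and the empty join) *)
Definition join_embedding {T1 T2 : Type} (le1 : T1 -> T1 -> Prop)
    (le2 : T2 -> T2 -> Prop) (f : T1 -> T2) : Prop :=
  (forall x y, le1 x y <-> le2 (f x) (f y)) /\
  (forall x y z, is_lub le1 x y z -> is_lub le2 (f x) (f y) (f z)) /\
  (forall b, is_least le1 b -> is_least le2 (f b)).

Definition fin_subsets_le (A B : {fset nat}) : Prop := fsubset A B.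

(* (X, le) is a sierpinskisation of alpha and omega: le is the intersection
   of a linear order L1 of type alpha and a linear order L2 of type omega. *)
Definition sierpinskisation (lt : nat -> nat -> Prop) (X : Type)
    (le : X -> X -> Prop) : Prop :=
  exists L1 L2 : X -> X -> Prop,
    (exists f : X -> nat, bijective f /\
        forall x y, L1 x y <-> (f x = f y \/ lt (f x) (f y))) /\
    (exists g : X -> nat, bijective g /\
        forall x y, L2 x y <-> (g x <= g y)%N) /\
    (forall x y, le x y <-> (L1 x y /\ L2 x y)).

Definition fg_initial {X : Type} (le : X -> X -> Prop) (A : X -> Prop) : Prop :=
  exists s : list X, forall x, A x <-> exists y, List.In y s /\ le x y.

Definition Ifin {X : Type} (le : X -> X -> Prop) : Type :=
  {A : X -> Prop | fg_initial le A}.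

Definition Ifin_le {X : Type} (le : X -> X -> Prop) (A B : Ifin le) : Prop :=
  forall x, proj1_sig A x -> proj1_sig B x.

Arguments sierpinskisation lt X le : clear implicits.
Arguments Ifin_le {X} le A B.
Arguments Ifin {X} le.

From mathcomp Require Import all_boot finmap boolp.

Set Implicit Arguments.
Unset Strict Implicit.
Unset Printing Implicit Defensive.

(* For b in alpha let Ile b and Ilt b be the ideals of P attached to the
   initial segments {x <= b} and {x < b}, and pick pt b in Ile b but not in
   Ilt b.  As P sits in [omega]^{<omega} and Ilt b is directed, the finite set
   pt b has a point bit b lying in no element of Ilt b; hence bit d in pt e
   forces d <= e in alpha.  The relation "bit d in pt e" thus has finite
   predecessor sets and is well founded, and well-founded recursion closes
   pt e into cl e, the join of pt e and of the cl d for its predecessors d.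
   Reading the finite sets cl e as binary numerals gives an injection of alpha
   into omega that is monotone along this closure; listing alpha in increasing
   order of these numbers is a chain of type omega, and its intersection with
   alpha is a sierpinskisation S in which bit d in pt e implies d <=_S e.
   Sending a finitely generated initial segment D of S to the join of the pt d,
   d in D, preserves finite joins, and the points bit d show that it reflects
   inclusion. *)

Definition code (A : {fset nat}) : nat := \sum_(i <- A) 2 ^ i.

Lemma codeD1 n A : code A = (n \in A) * 2 ^ n + code (A `\ n)%fset.
Proof.
case: (boolP (n \in A)) => nA; last by rewrite mem_fsetD1.
by rewrite /code (big_fsetD1 _ nA) mul1n.
Qed.

Lemma code_lt n A : {subset A <= gtn n} -> code A < 2 ^ n.
Proof.
elim: n A => [|n IHn] A ltA.
  by rewrite /code big1_seq // => i /ltA.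
rewrite (codeD1 n) expnS mul2n -addnn -addnS leq_add // ?leq_pmulr ?expn_gt0 //.
  by case: (n \in A); rewrite ?mul1n ?mul0n.
by apply: IHn => i /fsetD1P[ni /ltA]; rewrite !inE ltnS leq_eqVlt (negPf ni).
Qed.

Lemma fsubset_code A B : (A `<=` B)%fset -> code A <= code B.
Proof.
move=> /fsubsetP AB; rewrite /code (big_fsetID _ (mem A) B) /=.
rewrite (_ : [fset x in B | x \in A]%fset = A) ?leq_addr //.
by apply/fsetP => i; rewrite !inE /= andbC; case: (boolP (i \in A)) => // /AB ->.
Qed.

Lemma mem_code_lt i A : i \in A -> i < code A.
Proof.
move=> iA; rewrite (codeD1 i) iA mul1n.
exact: leq_trans (ltn_expl i (ltnSn 1)) (leq_addr _ _).
Qed.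

Lemma code_inj : injective code.
Proof.
suff codeK n A B : {subset A <= gtn n} -> {subset B <= gtn n} ->
    code A = code B -> A = B.
  move=> A B eqAB; apply: (codeK (code A)) => // i; rewrite inE; last rewrite eqAB.
    exact: mem_code_lt.
  exact: mem_code_lt.
elim: n A B => [|n IHn] A B ltA ltB eqAB.
  by apply/fsetP => i; apply/idP/idP => [/ltA|/ltB].
have ltD1 C : {subset C <= gtn n.+1} -> {subset (C `\ n)%fset <= gtn n}.
  by move=> ltC i /fsetD1P[ni /ltC]; rewrite !inE ltnS leq_eqVlt (negPf ni).
have eqD1 : (A `\ n = B `\ n)%fset -> (n \in A) = (n \in B) -> A = B.
  move=> eqD eqn; apply/fsetP => i; have := congr1 (fun C => i \in C) eqD.
  by rewrite !in_fsetD1; case: eqVneq => [->|].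
have ltAn := code_lt (ltD1 _ ltA); have ltBn := code_lt (ltD1 _ ltB).
move: eqAB; rewrite (codeD1 n A) (codeD1 n B).
case: (n \in A) (n \in B) eqD1 => [] [] eqD1; rewrite ?mul1n ?mul0n ?add0n.
- by move/addnI/(IHn _ _ (ltD1 _ ltA) (ltD1 _ ltB)) => /eqD1; apply.
- by move=> eqAB; move: ltBn; rewrite -eqAB ltnNge leq_addr.
- by move=> eqAB; move: ltAn; rewrite eqAB ltnNge leq_addr.
- by move/(IHn _ _ (ltD1 _ ltA) (ltD1 _ ltB)) => /eqD1; apply.
Qed.

Section UnboundedEnumeration.
Variable C : nat -> Prop.
Hypothesis C_unbounded : forall n, exists2 m, n <= m & C m.

Lemma next_in_ex n : exists m, `[< C m >] && (n <= m).
Proof. by have [m nm Cm] := C_unbounded n; exists m; rewrite nm andbT; apply/asboolP. Qed.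

Definition next_in n : nat := ex_minn (next_in_ex n).

Lemma next_inP n :
  [/\ C (next_in n), n <= next_in n & forall m, C m -> n <= m -> next_in n <= m].
Proof.
rewrite /next_in; case: ex_minnP => m /andP[/asboolP Cm nm] minm; split=> // k Ck nk.
by apply: minm; rewrite nk andbT; apply/asboolP.
Qed.

Fixpoint enum_in k : nat := if k is k'.+1 then next_in (enum_in k').+1 else next_in 0.

Lemma enum_inP k : C (enum_in k).
Proof. by case: k => [|k]; [case: (next_inP 0) | case: (next_inP (enum_in k).+1)]. Qed.

Lemma enum_in_ltS k : enum_in k < enum_in k.+1.
Proof. by case: (next_inP (enum_in k).+1). Qed.

Lemma enum_in_mono : {mono enum_in : j k / j <= k}.
Proof. apply: leq_mono; apply: homo_ltn; [exact: ltn_trans | exact: enum_in_ltS]. Qed.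

Lemma enum_in_onto m : C m -> exists k, enum_in k = m.
Proof.
move=> Cm; have infl k : k <= enum_in k.
  by elim: k => // k IHk; apply: leq_ltn_trans IHk (enum_in_ltS k).
have [k mk mink] := ex_minnP (ex_intro (fun k => m <= enum_in k) m (infl m)).
exists k; apply/eqP; rewrite eqn_leq mk andbT.
case: k mk mink => [|k] _ mink;
  [case: (next_inP 0) | case: (next_inP (enum_in k).+1)] => _ _; apply=> //.
by rewrite ltnNge; apply/negP => /mink; rewrite ltnn.
Qed.

End UnboundedEnumeration.

Lemma increasing_rearrangement (kappa : nat -> nat) : injective kappa ->
  exists a : nat -> nat, bijective a /\ {mono kappa \o a : j k / j <= k}.
Proof.
move=> kappa_inj; pose C m := exists e, kappa e = m.
have C_unbounded n : exists2 m, n <= m & C m.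
  suff [e ne] : exists e, n <= kappa e by exists (kappa e) => //; exists e.
  apply: contrapT => nbd.
  have ltk (i : 'I_n.+1) : kappa i < n.
    by rewrite ltnNge; apply/negP => ?; apply: nbd; exists i.
  have /leq_card : injective (fun i : 'I_n.+1 => Ordinal (ltk i)).
    by move=> i j [/kappa_inj/val_inj].
  by rewrite !card_ord ltnn.
pose a k := sval (cid (enum_inP C_unbounded k)).
have aE k : kappa (a k) = enum_in C_unbounded k := svalP (cid (enum_inP C_unbounded k)).
have onto e : exists k, enum_in C_unbounded k = kappa e.
  by apply: enum_in_onto; exists e.
pose b e := sval (cid (onto e)).
have bE e : enum_in C_unbounded (b e) = kappa e := svalP (cid (onto e)).
exists a; split => [|j k]; last by rewrite /= !aE enum_in_mono.
exists b => [k|e]; first by apply/(incn_inj (enum_in_mono C_unbounded)); rewrite bE aE.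
by apply: kappa_inj; rewrite aE bE.
Qed.

Section IdealsOfAPoset.
Variables (T : Type) (le : T -> T -> Prop) (I : T -> Prop).
Hypothesis I_ideal : ideal le I.

Lemma ideal_le x y : le x y -> I y -> I x.
Proof. by case: I_ideal => _ [I_down _]; exact: I_down. Qed.

Lemma ideal_lub x y z : I x -> I y -> is_lub le x y z -> I z.
Proof.
move=> Ix Iy [_ [_ z_least]]; case: I_ideal => _ [_ I_directed].
have [u [Iu [xu yu]]] := I_directed _ _ Ix Iy.
exact: ideal_le (z_least _ xu yu) Iu.
Qed.

Lemma ideal_least b : is_least le b -> I b.
Proof. by case: I_ideal => [[x Ix] _] b_least; exact: ideal_le (b_least x) Ix. Qed.

End IdealsOfAPoset.

Section FinitelyGeneratedInitialSegments.
Variables (X : Type) (leX : X -> X -> Prop).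
Hypothesis leX_refl : forall x, leX x x.
Hypothesis leX_trans : forall x y z, leX x y -> leX y z -> leX x z.

Lemma Ifin_closed (D : Ifin leX) x z : sval D x -> leX z x -> sval D z.
Proof.
case: D => A [s sA] /= /sA[y [ys xy]] zx; apply/sA.
by exists y; split=> //; exact: leX_trans zx xy.
Qed.

Lemma Ifin_le_anti (D1 D2 : Ifin leX) :
  Ifin_le leX D1 D2 -> Ifin_le leX D2 D1 -> D1 = D2.
Proof.
case: D1 D2 => [A1 fg1] [A2 fg2] /= le12 le21.
have eqA : A1 = A2 by apply/funext => x; apply/propext; split; [exact: le12 | exact: le21].
by subst A2; congr exist; exact: Prop_irrelevance.
Qed.

Lemma fg_initialU (A1 A2 : X -> Prop) : fg_initial leX A1 -> fg_initial leX A2 ->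
  fg_initial leX (fun x => A1 x \/ A2 x).
Proof.
move=> [s1 sA1] [s2 sA2]; exists (s1 ++ s2) => x; rewrite sA1 sA2; split.
  by case=> [] [y [ys xy]]; exists y; split=> //; apply/List.in_app_iff; [left|right].
by case=> y [/List.in_app_iff[ys|ys] xy]; [left|right]; exists y.
Qed.

Lemma fg_initial0 : fg_initial leX (fun _ => False).
Proof. by exists [::] => x; split=> // -[y []]. Qed.

Lemma fg_initial1 x : fg_initial leX (leX^~ x).
Proof. by exists [:: x] => z; split=> [zx|[y [[<-|[]] //]]]; exists x; split=> //; left. Qed.

Definition Ifin_join (D1 D2 : Ifin leX) : Ifin leX :=
  exist _ _ (fg_initialU (svalP D1) (svalP D2)).
Definition Ifin_bot : Ifin leX := exist _ _ fg_initial0.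
Definition Ifin_down x : Ifin leX := exist _ _ (fg_initial1 x).

Lemma Ifin_joinP D1 D2 : is_lub (Ifin_le leX) D1 D2 (Ifin_join D1 D2).
Proof. by split; [|split] => [x|x|D le1 le2 x [] /=]; [left|right|apply: le1|apply: le2]. Qed.

Lemma Ifin_botP : is_least (Ifin_le leX) Ifin_bot.
Proof. by move=> D x []. Qed.

Lemma Ifin_semilattice : join_semilattice_bot (Ifin_le leX).
Proof.
split; last by split; [move=> D1 D2; exists (Ifin_join D1 D2); exact: Ifin_joinP
                      | exists Ifin_bot; exact: Ifin_botP].
split; first by move=> D x.
split; first exact: Ifin_le_anti.
by move=> D1 D2 D3 le12 le23 x /le12 /le23.
Qed.

Lemma Ifin_in_J (lt : nat -> nat -> Prop) (f : X -> nat) : bijective f ->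
  (forall x y, leX x y -> f x = f y \/ lt (f x) (f y)) -> in_J lt (Ifin_le leX).
Proof.
move=> [g fK gK] f_mono; split; first exact: Ifin_semilattice.
exists (fun A D => forall x, sval D x -> A (f x)); split.
  move=> A _; split; first by exists Ifin_bot => x [].
  split; first by move=> D1 D2 le12 AD2 x /le12 /AD2.
  move=> D1 D2 AD1 AD2; exists (Ifin_join D1 D2).
  by have [le1 [le2 _]] := Ifin_joinP D1 D2; split=> // x [/AD1|/AD2].
move=> A B initA _; split=> [AB D AD x /AD /AB //|FAB n An].
have AD : forall x, sval (Ifin_down (g n)) x -> A (f x).
  by move=> x /f_mono; rewrite gK => -[->|/initA]; [|apply].
by rewrite -[n]gK; apply: FAB AD _ (leX_refl (g n)).
Qed.

End FinitelyGeneratedInitialSegments.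

Section JoinEmbeddingIntoFinSets.
Variables (T : Type) (le : T -> T -> Prop) (f0 : T -> {fset nat}).
Hypothesis f0_embedding : join_embedding le fin_subsets_le f0.
Hypothesis join_ex : forall x y, exists z, is_lub le x y z.
Hypothesis bot_ex : exists b, is_least le b.

Lemma le_subset x z : le x z <-> {subset f0 x <= f0 z}.
Proof. by rewrite (proj1 f0_embedding); split=> /fsubsetP. Qed.

Definition join x y : T := sval (cid (join_ex x y)).
Definition bot : T := sval (cid bot_ex).

Lemma joinP x y : is_lub le x y (join x y). Proof. exact: svalP (cid _). Qed.
Lemma botP : is_least le bot. Proof. exact: svalP (cid _). Qed.

Lemma f0_join x y : f0 (join x y) = (f0 x `|` f0 y)%fset.
Proof.
have [_ [f0_lub _]] := f0_embedding.
have [le1 [le2 least]] := f0_lub _ _ _ (joinP x y).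
apply/eqP; rewrite eqEfsubset fsubUset (least _ (fsubsetUl _ _) (fsubsetUr _ _)).
exact/and3P.
Qed.

Lemma f0_bot : f0 bot = fset0.
Proof.
have [_ [_ f0_least]] := f0_embedding.
by apply/eqP; rewrite -fsubset0; exact: f0_least _ botP fset0.
Qed.

Notation bigjoin s g := (\big[join/bot]_(i <- s) g i).

Lemma mem_bigjoin (I : eqType) (s : seq I) (g : I -> T) n :
  reflect (exists2 i, i \in s & n \in f0 (g i)) (n \in f0 (bigjoin s g)).
Proof.
rewrite (big_morph f0 f0_join f0_bot).
by apply: (iffP (bigfcupP _ _ _ _)) => -[i]; rewrite ?andbT; exists i; rewrite ?andbT.
Qed.

Section Ideals.
Variable I : T -> Prop.
Hypothesis I_ideal : ideal le I.

Lemma ideal_bigjoin (J : eqType) (s : seq J) (g : J -> T) :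
  (forall i, i \in s -> I (g i)) -> I (bigjoin s g).
Proof.
move=> Ig; rewrite big_seq; apply: big_ind => //.
  exact: (ideal_least I_ideal botP).
by move=> x y Ix Iy; exact: (ideal_lub I_ideal Ix Iy (joinP x y)).
Qed.

Lemma ideal_avoid p : ~ I p -> exists2 n, n \in f0 p & forall k, I k -> n \notin f0 k.
Proof.
move=> notIp; apply: contrapT => no_avoid.
have cover n : n \in f0 p -> exists k, I k /\ n \in f0 k.
  move=> np; apply: contrapT => no_k; apply: no_avoid; exists n => // k Ik.
  by apply/negP => nk; apply: no_k; exists k.
pose g n := if pselect (exists k, I k /\ n \in f0 k) is left h then sval (cid h) else bot.
apply: notIp; apply: (ideal_le I_ideal (y := bigjoin (f0 p) g)).
  apply/le_subset => n np; apply/mem_bigjoin; exists n => //.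
  by rewrite /g; case: pselect => [h|/(_ (cover n np))//]; case: (svalP (cid h)).
apply: ideal_bigjoin => n _; rewrite /g; case: pselect => [h|_].
  by case: (svalP (cid h)).
exact: (ideal_least I_ideal botP).
Qed.

End Ideals.

Section IfinImage.
Variables (leS : nat -> nat -> Prop) (pt : nat -> T) (w : nat -> nat).
Hypothesis leS_trans : forall i j k, leS i j -> leS j k -> leS i k.
Hypothesis leS_leq : forall j k, leS j k -> j <= k.
Hypothesis w_pt : forall k, w k \in f0 (pt k).
Hypothesis w_leS : forall j k, w j \in f0 (pt k) -> leS j k.

Lemma Ifin_bounded (D : Ifin leS) : exists N, forall k, sval D k -> k < N.
Proof.
case: D => A [s sA] /=.
have [N ltN] : exists N, forall y, List.In y s -> y < N.
  elim: s {sA} => [|j s [N ltN]]; first by exists 0.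
  by exists (maxn j.+1 N) => y [<-|/ltN yN]; rewrite leq_max ?ltnSn ?yN ?orbT.
by exists N => k /sA[y [/ltN yN /leS_leq ky]]; exact: leq_ltn_trans ky yN.
Qed.

(* D is finite as leS is contained in <=, so the join can run over a bound. *)
Definition Ifin_image (D : Ifin leS) : T :=
  \big[join/bot]_(k <- iota 0 (sval (cid (Ifin_bounded D))) | `[< sval D k >]) pt k.

Lemma mem_Ifin_image D n :
  reflect (exists2 k, sval D k & n \in f0 (pt k)) (n \in f0 (Ifin_image D)).
Proof.
rewrite /Ifin_image (big_morph f0 f0_join f0_bot); case: (cid _) => N ltN /=.
apply: (iffP (bigfcupP _ _ _ _)) => -[k].
  by rewrite mem_iota /= => /andP[_ /asboolP Dk]; exists k.
by move=> Dk nk; exists k; rewrite // mem_iota ltN //=; apply/asboolP.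
Qed.

Lemma Ifin_image_le D1 D2 : Ifin_le leS D1 D2 <-> le (Ifin_image D1) (Ifin_image D2).
Proof.
rewrite le_subset; split=> [le12 n /mem_Ifin_image[k /le12 D2k nk]|sub12 j D1j].
  by apply/mem_Ifin_image; exists k.
have /sub12/mem_Ifin_image[k D2k wk] : w j \in f0 (Ifin_image D1).
  by apply/mem_Ifin_image; exists j.
exact: (Ifin_closed leS_trans D2k (w_leS wk)).
Qed.

Lemma Ifin_image_embedding : join_embedding (Ifin_le leS) le Ifin_image.
Proof.
split; first exact: Ifin_image_le.
split=> [D1 D2 D3 [le13 [le23 least3]]|B B_least].
  have [le1 [le2 least]] := Ifin_joinP D1 D2.
  split; first exact/Ifin_image_le.
  split; first exact/Ifin_image_le.
  move=> u le1u le2u; apply/le_subset => n /mem_Ifin_image[k /(least3 _ le1 le2)].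
  by case=> Dk nk; [move/le_subset: le1u | move/le_subset: le2u]; apply;
    apply/mem_Ifin_image; exists k.
move=> u; apply/le_subset => n /mem_Ifin_image[k Bk _].
by case: (B_least (Ifin_bot leS) k Bk).
Qed.

End IfinImage.

Section Construction.
Variables (lt : nat -> nat -> Prop).
Hypothesis lt_irr : forall x, ~ lt x x.
Hypothesis lt_trans : forall x y z, lt x y -> lt y z -> lt x z.
Hypothesis lt_total : forall x y, x <> y -> lt x y \/ lt y x.
Hypothesis lt_wf : well_founded lt.
Variable F : (nat -> Prop) -> (T -> Prop).
Hypothesis F_ideal : forall A, initial_segment lt A -> ideal le (F A).
Hypothesis F_mono : forall A B, initial_segment lt A -> initial_segment lt B ->
  ((forall n, A n -> B n) <-> (forall p, F A p -> F B p)).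

Definition lte x y := x = y \/ lt x y.

Lemma lte_trans x y z : lte x y -> lte y z -> lte x z.
Proof. by move=> [->|xy] // [<-|yz]; right=> //; exact: lt_trans xy yz. Qed.

Lemma lt_initial b : initial_segment lt (lt^~ b).
Proof. by move=> x y xy yb; exact: lt_trans xy yb. Qed.

Lemma lte_initial b : initial_segment lt (lte^~ b).
Proof. by move=> x y xy yb; apply: lte_trans yb; right. Qed.

Lemma lte_anti x y : lte x y -> lte y x -> x = y.
Proof. by move=> [//|xy] [//|yx]; case: (lt_irr (lt_trans xy yx)). Qed.

Lemma lteVgt x y : lte x y \/ lt y x.
Proof. by case: (pselect (x = y)) => [|/lt_total[]]; [left; left|left; right|right]. Qed.

Definition Ilt b := F (lt^~ b).
Definition Ile b := F (lte^~ b).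

Lemma Ilt_ideal b : ideal le (Ilt b). Proof. exact/F_ideal/(@lt_initial b). Qed.
Lemma Ile_ideal b : ideal le (Ile b). Proof. exact/F_ideal/(@lte_initial b). Qed.

Lemma Ile_Ilt b c p : lt b c -> Ile b p -> Ilt c p.
Proof.
move=> bc; apply: (proj1 (F_mono (@lte_initial b) (@lt_initial c))) p.
by move=> n [->|nb] //; exact: lt_trans nb bc.
Qed.

Lemma Ile_lte b c p : lte b c -> Ile b p -> Ile c p.
Proof.
move=> bc; apply: (proj1 (F_mono (@lte_initial b) (@lte_initial c))) p.
by move=> n nb; exact: lte_trans nb bc.
Qed.

Lemma Ile_not_Ilt b : exists p, Ile b p /\ ~ Ilt b p.
Proof.
apply: contrapT => all_Ilt.
have /(proj2 (F_mono (@lte_initial b) (@lt_initial b))) /(_ b (or_introl erefl)) :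
    forall p, Ile b p -> Ilt b p.
  by move=> p Ip; apply: contrapT => notIp; apply: all_Ilt; exists p.
exact: lt_irr.
Qed.

Definition pt b : T := sval (cid (Ile_not_Ilt b)).

Lemma pt_Ile b : Ile b (pt b). Proof. by case: (svalP (cid (Ile_not_Ilt b))). Qed.
Lemma pt_Ilt b : ~ Ilt b (pt b). Proof. by case: (svalP (cid (Ile_not_Ilt b))). Qed.

Lemma bit_ex b : exists n, n \in f0 (pt b) /\ forall k, Ilt b k -> n \notin f0 k.
Proof.
have [n nb nI] := ideal_avoid (Ilt_ideal b) (@pt_Ilt b).
by exists n.
Qed.

Definition bit b : nat := sval (cid (bit_ex b)).

Lemma bit_pt b : bit b \in f0 (pt b).
Proof. by case: (svalP (cid (bit_ex b))). Qed.

Lemma bit_Ilt b k : Ilt b k -> bit b \notin f0 k.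
Proof. by case: (svalP (cid (bit_ex b))) => _; apply. Qed.

Lemma bit_lte d e u : Ile e u -> bit d \in f0 u -> lte d e.
Proof.
move=> eu du; case: (lteVgt d e) => // ed.
by move: (bit_Ilt (Ile_Ilt ed eu)); rewrite du.
Qed.

Lemma bit_inj : injective bit.
Proof.
move=> d e eq_bit; apply: lte_anti.
  by apply: bit_lte (pt_Ile e) _; rewrite eq_bit bit_pt.
by apply: bit_lte (pt_Ile d) _; rewrite -eq_bit bit_pt.
Qed.

Definition bit_inv n : option nat :=
  if pselect (exists d, bit d = n) is left h then Some (sval (cid h)) else None.

Lemma bitK : pcancel bit bit_inv.
Proof.
move=> d; rewrite /bit_inv; case: pselect => [h|]; last by case; exists d.
by congr Some; apply: bit_inj; exact: svalP (cid h).
Qed.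

Lemma bit_invK n d : bit_inv n = Some d -> bit d = n.
Proof. by rewrite /bit_inv; case: pselect => // h [<-]; exact: svalP (cid h). Qed.

Definition preds e : seq nat := [seq d <- pmap bit_inv (f0 (pt e)) | d != e].

Lemma mem_preds d e : (d \in preds e) = (bit d \in f0 (pt e)) && (d != e).
Proof.
rewrite mem_filter andbC mem_pmap; congr (_ && _); apply/mapP/idP => [[n n_pt]|d_pt].
  by move/esym/bit_invK ->.
by exists (bit d); rewrite ?bitK.
Qed.

Lemma preds_lt d e : d \in preds e -> lt d e.
Proof.
rewrite mem_preds => /andP[d_pt /eqP de].
by case: (bit_lte (pt_Ile e) d_pt).
Qed.

(* The guard [pselect (lt d e)] always holds on [preds e] (see [clE]); it only
   makes the recursive calls well typed. *)
Definition cl_step e (rec : forall d, lt d e -> T) : T :=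
  join (pt e) (\big[join/bot]_(d <- preds e)
                  if pselect (lt d e) is left de then rec d de else bot).

Definition cl : nat -> T := Fix lt_wf (fun _ => T) cl_step.

Lemma clE e : cl e = join (pt e) (bigjoin (preds e) cl).
Proof.
rewrite /cl Fix_eq => [|e' f g fg]; last first.
  by congr join; apply: eq_bigr => d _; case: pselect.
congr join; rewrite big_seq [RHS]big_seq; apply: eq_bigr => d /preds_lt de.
by case: pselect.
Qed.

Lemma cl_Ile e : Ile e (cl e).
Proof.
elim/(well_founded_ind lt_wf): e => e IHe; rewrite clE.
apply: (ideal_lub (Ile_ideal e) (pt_Ile e) _ (joinP _ _)).
apply: (ideal_bigjoin (Ile_ideal e)) => d /preds_lt de.
by apply: Ile_lte (or_intror de) _; exact: IHe.
Qed.

Lemma pt_le_cl e : le (pt e) (cl e).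
Proof. by rewrite clE; exact: proj1 (joinP _ _). Qed.

Lemma cl_le d e : d \in preds e -> le (cl d) (cl e).
Proof.
move=> d_preds; apply/le_subset => n n_cl; rewrite clE f0_join inE; apply/orP; right.
by apply/mem_bigjoin; exists d.
Qed.

Lemma cl_not_Ilt e : ~ Ilt e (cl e).
Proof.
by move/(ideal_le (Ilt_ideal e) (pt_le_cl e)); exact: pt_Ilt.
Qed.

Lemma cl_le_lte d e : le (cl d) (cl e) -> lte d e.
Proof.
move=> de; case: (lteVgt d e) => // ed; case: (@cl_not_Ilt d).
exact: Ile_Ilt ed (ideal_le (Ile_ideal e) de (cl_Ile e)).
Qed.

Definition weight e : nat := code (f0 (cl e)).

Lemma weight_le d e : le (cl d) (cl e) -> weight d <= weight e.
Proof. by move/le_subset/fsubsetP; exact: fsubset_code. Qed.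

Lemma weight_inj : injective weight.
Proof.
by move=> d e /code_inj eq_cl; apply: lte_anti; apply: cl_le_lte; apply/le_subset;
  rewrite eq_cl.
Qed.

Section SortedByWeight.
Variable a : nat -> nat.
Hypothesis a_bij : bijective a.
Hypothesis a_mono : {mono weight \o a : j k / j <= k}.

(* The index j stands for the point a j of alpha; the omega-order of S is the
   order of the indices. *)
Definition leS j k := lte (a j) (a k) /\ j <= k.

Lemma leS_refl j : leS j j.
Proof. by split; [left|]. Qed.

Lemma leS_trans i j k : leS i j -> leS j k -> leS i k.
Proof.
by move=> [ij1 ij2] [jk1 jk2]; split; [exact: lte_trans ij1 jk1 | exact: leq_trans ij2 jk2].
Qed.

Lemma leS_leq j k : leS j k -> j <= k.
Proof. by case. Qed.

Lemma bit_leS j k : bit (a j) \in f0 (pt (a k)) -> leS j k.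
Proof.
move=> jk; split; first exact: bit_lte (pt_Ile _) jk.
case: (eqVneq (a j) (a k)) => [/(bij_inj a_bij)->//|ne].
by rewrite -a_mono; apply/weight_le/cl_le; rewrite mem_preds jk ne.
Qed.

Lemma leS_sierpinskisation : sierpinskisation lt nat leS.
Proof.
exists (fun j k => lte (a j) (a k)), (fun j k => j <= k); split; first by exists a.
by split=> //; exists id; split=> //; exists id.
Qed.

End SortedByWeight.

Lemma sierpinskisation_embedding : exists (X : Type) (leX : X -> X -> Prop),
  sierpinskisation lt X leX /\ in_J lt (Ifin_le leX) /\
  exists g : Ifin leX -> T, join_embedding (Ifin_le leX) le g.
Proof.
have [a [a_bij a_mono]] := increasing_rearrangement weight_inj.
exists nat, (leS a); split; first exact: leS_sierpinskisation.
split; first by apply: Ifin_in_J a_bij _ => [j|j k []]; [exact: leS_refl|].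
exists (Ifin_image (pt \o a) (@leS_leq a)).
by apply: (Ifin_image_embedding (w := bit \o a)) => [i j k|k|j k];
  [exact: leS_trans | exact: bit_pt | exact: bit_leS].
Qed.

End Construction.
End JoinEmbeddingIntoFinSets.

Theorem theorem2p5 (lt : nat -> nat -> Prop) (Halpha : strict_well_order lt)
    (T : Type) (le : T -> T -> Prop) (HP : in_J lt le) :
  (exists f : T -> {fset nat}, join_embedding le fin_subsets_le f) ->
  exists (X : Type) (leS : X -> X -> Prop),
    sierpinskisation lt X leS /\
    in_J lt (Ifin_le leS) /\
    exists g : Ifin leS -> T, join_embedding (Ifin_le leS) le g.
Proof.
move=> [f0 f0_embedding].
have [[_ [join_ex bot_ex]] [F [F_ideal F_mono]]] := HP.
have [lt_irr [lt_trans [lt_total lt_wf]]] := Halpha.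
exact: (sierpinskisation_embedding f0_embedding join_ex bot_ex
          lt_irr lt_trans lt_total lt_wf F_ideal F_mono).
Qed.
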